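(* For the class $\mathcal P_m$ of envy-free item-pricing auctions with prices in $\{1/m,\dots,m/m\}^k$, the matrix $\Gamma^{\mathrm{IP}}$ is $(2,1)$-admissible and implementable with complexity $m$ (with respect to learner actions $\mathcal P_m$, adversary actions = profiles of combinatorial valuations, and payoff $f(\vec a,\vec v)=\mathrm{Rev}(\vec a,\vec v)$).
   Context: There are $k$ heterogeneous items with supplies $s_\ell\ge1$ (possibly infinite), and $n$ bidders with combinatorial valuations $v_i:\{0,1\}^k\to[0,1]$, $v_i(\vec 0)=0$. An envy-free item-pricing auction with price vector $\vec a$ considers bidders $i=1,\dots,n$ in order and gives bidder $i$ a bundle $\vec q_i\in\{0,1\}^k$ maximizing $v_i(\vec q_i)-\vec a\cdot\vec q_i$ among bundles composable from remaining supplies (ties in utility broken in favor of a bundle with larger total price), charging $\vec a\cdot\vec q_i$; $\mathrm{Rev}(\vec a,\vec v)$ is the total charge. $\mathcal P_m$: such auctions with all $a_\ell\in\{1/m,\dots,m/m\}$. $\Gamma^{\mathrm{IP}}$: the $|\mathcal P_m|\times k\lceil\log_2m\rceil$ binary matrix whose entry in row $\vec a$ and column $(\ell-1)\lceil\log_2 m\rceil+\beta$ is the $\beta$-th bit of the integer $ma_\ell$. A matrix $\Gamma$ (rows indexed by learner actions) is $(\kappa,\delta)$-admissible if its rows are distinct, each column has at most $\kappa$ distinct values and distinct values in a column differ by at least $\delta$; it is implementable with complexity $M$ if for each column $j$ there is a finite set $S_j$ of pairs $(w,y)$ ($w\ge0$, $y$ an adversary action), $|S_j|\le M$, with $\Gamma_{xj}-\Gamma_{x'j}=\sum_{(w,y)\in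 S_j}w(f(x,y)-f(x',y))$ for all learner actions $x,x'$. *)

From HB Require Import structures.
From mathcomp Require Import all_boot all_order all_algebra.
Set Implicit Arguments. Unset Strict Implicit. Unset Printing Implicit Defensive.
Import Order.TTheory GRing.Theory Num.Theory.
Local Open Scope ring_scope.

Definition admissible (R : realFieldType) (X J : finType) (G : X -> J -> R)
    (kappa : nat) (delta : R) : Prop :=
  (forall x x' : X, (forall j, G x j = G x' j) -> x = x') /\
  (forall j, (size (undup [seq G x j | x <- enum X]) <= kappa)%N) /\
  (forall j x x', G x j != G x' j -> delta <= `|G x j - G x' j|).

(* Implementable with complexity M w.r.t. payoff f : X -> Y -> R, where the
   adversary actions are the y : Y satisfying Yok. S_j is a finite set of
   pairs (w, y), represented as a duplicate-free sequence. *)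
Definition implementable (R : realFieldType) (X : finType) (Y : eqType)
    (Yok : Y -> Prop) (f : X -> Y -> R) (J : finType) (G : X -> J -> R)
    (M : nat) : Prop :=
  forall j : J, exists S : seq (R * Y),
    [/\ uniq S, (size S <= M)%N,
        (forall p, p \in S -> 0 <= p.1 /\ Yok p.2) &
        (forall x x' : X,
           G x j - G x' j = \sum_(p <- S) p.1 * (f x p.2 - f x' p.2))].

Definition bundle (k : nat) := {ffun 'I_k -> bool}.

Definition bundle0 (k : nat) : bundle k := [ffun _ => false].

Section Auction.
Variables (R : realFieldType) (k : nat).

Definition bprice (a : 'I_k -> R) (q : bundle k) : R :=
  \sum_(l < k) a l * (q l)%:R.

(* supplies: None = infinite supply, Some c = supply c;
   used l = number of copies of item l already sold *)
Definition feasible (s : 'I_k -> option nat) (used : {ffun 'I_k -> nat})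
    (q : bundle k) : bool :=
  [forall l, q l ==> (if s l is Some c then (used l < c)%N else true)].

Definition best_bundles (s : 'I_k -> option nat) (used : {ffun 'I_k -> nat})
    (a : 'I_k -> R) (v : {ffun bundle k -> R}) : {set bundle k} :=
  let F := [set q | feasible s used q] in
  let u q := v q - bprice a q in
  let B := [set q in F | [forall q', (q' \in F) ==> (u q' <= u q)]] in
  [set q in B | [forall q', (q' \in B) ==> (bprice a q' <= bprice a q)]].

(* tie : any rule selecting an element of a nonempty set of bundles
   (resolves ties remaining after the price tie-break). *)
Fixpoint run (s : 'I_k -> option nat) (tie : {set bundle k} -> bundle k)
    (a : 'I_k -> R) (vs : seq {ffun bundle k -> R})
    (used : {ffun 'I_k -> nat}) : R :=
  match vs with
  | [::] => 0
  | v :: vs' =>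
      let q := tie (best_bundles s used a v) in
      bprice a q + run s tie a vs' [ffun l => (used l + q l)%N]
  end.

Definition Rev (n : nat) (s : 'I_k -> option nat)
    (tie : {set bundle k} -> bundle k) (a : 'I_k -> R)
    (v : {ffun 'I_n -> {ffun bundle k -> R}}) : R :=
  run s tie a [seq v i | i <- enum 'I_n] [ffun _ => 0%N].

Definition valid_profile (n : nat) (v : {ffun 'I_n -> {ffun bundle k -> R}})
    : Prop :=
  forall i, v i (bundle0 k) = 0 /\ (forall q, 0 <= v i q <= 1).

End Auction.

(* Learner actions P_m: a price vector with a_l = (x l).+1 / m, x l : 'I_m *)
Definition priceVec (R : realFieldType) (k m : nat) (x : {ffun 'I_k -> 'I_m})
    : 'I_k -> R :=
  fun l => ((x l).+1)%:R / m%:R.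

Definition nbits (m : nat) : nat := up_log 2 m.

(* Gamma^IP: entry in row x and (0-based) column j = l0 * nbits m + b0 is the
   (b0+1)-th least significant bit of the integer m * a_l = (x l).+1. *)
Definition GammaIP (R : realFieldType) (k m : nat)
    (x : {ffun 'I_k -> 'I_m}) (j : 'I_(k * nbits m)) : R :=
  match (insub (j %/ nbits m)%N : option 'I_k) with
  | Some l => (odd (((x l).+1) %/ 2 ^ (j %% nbits m)))%:R
  | None => 0
  end.

(* Every entry of Gamma^IP is a bit of some m a_l, so it takes only the values 0
   and 1, and since 0 < m a_l <= m <= 2^ceil(log2 m) the bits determine a; this
   gives (2,1)-admissibility. For implementability of the column of bit b of
   item l, use the profiles in which the first bidder values item l alone at
   t/m and the other bidders value nothing: the revenue is a_l if a_l <= t/m and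
   0 otherwise. Weighting these m profiles by w_t = W(t) - W(t+1), where
   W(t) = m (bit_b(t) + m) / t for t <= m and W(m+1) = 0, the weighted revenue
   telescopes to W(m a_l) a_l = bit_b(m a_l) + m, and the constant m cancels in
   differences. *)
From HB Require Import structures.
From mathcomp Require Import all_boot all_order all_algebra.
From mathcomp Require Import ring lra zify.
Import Order.TTheory GRing.Theory Num.Theory.
Set Implicit Arguments. Unset Strict Implicit. Unset Printing Implicit Defensive.

Lemma modn_pow2S p e : p %% 2 ^ e.+1 = odd p + 2 * (p %/ 2 %% 2 ^ e).
Proof.
have lt_mod : p %/ 2 %% 2 ^ e < 2 ^ e by rewrite ltn_pmod // expn_gt0.
have def_p : p = p %/ 2 %/ 2 ^ e * 2 ^ e.+1 + (odd p + 2 * (p %/ 2 %% 2 ^ e)).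
  have := divn_eq p 2; have := divn_eq (p %/ 2) (2 ^ e); rewrite modn2 expnS.
  move: (p %/ 2) (p %/ 2 %/ 2 ^ e) (p %/ 2 %% 2 ^ e) (2 ^ e) => a b c d.
  nia.
rewrite {1}def_p modnMDl modn_small // expnS; case: (odd p) => /=; lia.
Qed.

Lemma eq_modn_pow2 e p p' :
  (forall b, b < e -> odd (p %/ 2 ^ b) = odd (p' %/ 2 ^ b)) ->
  p %% 2 ^ e = p' %% 2 ^ e.
Proof.
elim: e p p' => [|e IHe] p p' eq_bits; first by rewrite !modn1.
rewrite !modn_pow2S (IHe (p %/ 2) (p' %/ 2)).
  by have := eq_bits 0 isT; rewrite !expn0 !divn1 => ->.
by move=> b lt_be; rewrite -!divnMA -expnS; apply: eq_bits.
Qed.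

Lemma eq_of_low_bits e p p' : 0 < p <= 2 ^ e -> 0 < p' <= 2 ^ e ->
  (forall b, b < e -> odd (p %/ 2 ^ b) = odd (p' %/ 2 ^ b)) -> p = p'.
Proof.
move=> /andP[p_gt0 le_p] /andP[p'_gt0 le_p'] /eq_modn_pow2 /eqP.
have modE q : 0 < q -> q %% 2 ^ e = (q.-1 + 1) %% 2 ^ e by rewrite addn1 => /prednK ->.
have pred_lt q : 0 < q <= 2 ^ e -> q.-1 < 2 ^ e by lia.
rewrite (modE p) // (modE p') // eqn_modDr !modn_small ?pred_lt ?p_gt0 ?p'_gt0 //.
by move=> /eqP; lia.
Qed.

Local Open Scope ring_scope.

Section SingleMinded.
Variables (R : realFieldType) (k : nat).

Definition single_minded (l : 'I_k) (c : R) : {ffun bundle k -> R} :=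
  [ffun q : bundle k => c * (q l)%:R].

Definition unit_bundle (l : 'I_k) : bundle k := [ffun i => i == l].

Lemma bprice0 (a : 'I_k -> R) : bprice a (bundle0 k) = 0.
Proof. by apply: big1 => i _; rewrite ffunE mulr0. Qed.

Lemma bprice_unit (a : 'I_k -> R) l : bprice a (unit_bundle l) = a l.
Proof.
rewrite /bprice (bigD1 l) //= big1 ?ffunE ?eqxx ?mulr1 ?addr0 //.
by move=> i /negbTE neq_il; rewrite ffunE neq_il mulr0.
Qed.

Lemma bprice_ge0 (a : 'I_k -> R) (q : bundle k) :
  (forall i, 0 <= a i) -> 0 <= bprice a q.
Proof. by move=> a_ge0; apply: sumr_ge0 => i _; rewrite mulr_ge0 ?ler0n. Qed.

Lemma bprice_ge_item (a : 'I_k -> R) l (q : bundle k) :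
  (forall i, 0 <= a i) -> a l * (q l)%:R <= bprice a q.
Proof.
move=> a_ge0; rewrite /bprice (bigD1 l) //= lerDl.
by apply: sumr_ge0 => i _; rewrite mulr_ge0 ?ler0n.
Qed.

Lemma feasible0 s used : feasible s used (bundle0 k).
Proof. by apply/forallP => i; rewrite ffunE. Qed.

Lemma feasible_unit_bundle s l : (forall l c, s l = Some c -> (0 < c)%N) ->
  feasible s [ffun _ => 0%N] (unit_bundle l).
Proof.
move=> s_gt0; apply/forallP => i; rewrite !ffunE; apply/implyP => /eqP ->.
by case s_l: (s l) => [c|] //; apply: s_gt0 s_l.
Qed.

Variables (s : 'I_k -> option nat) (tie : {set bundle k} -> bundle k).
Hypothesis tie_in : forall A : {set bundle k}, A != set0 -> tie A \in A.

Lemma bprice_tie_best used a (v : {ffun bundle k -> R}) q0 :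
  let u q := v q - bprice a q in
  feasible s used q0 ->
  (forall q, feasible s used q -> u q <= u q0) ->
  (forall q, feasible s used q -> u q0 <= u q -> bprice a q <= bprice a q0) ->
  bprice a (tie (best_bundles s used a v)) = bprice a q0.
Proof.
move=> u feas_q0 u_max price_max.
have q0_best : q0 \in best_bundles s used a v.
  rewrite !inE feas_q0; apply/andP; split.
    by apply/forallP => q; apply/implyP; rewrite inE; apply: u_max.
  apply/forallP => q; apply/implyP; rewrite !inE => /andP[feas_q /forallP u_q].
  by apply: price_max => //; apply: (implyP (u_q q0)); rewrite inE.
have best_neq0 : best_bundles s used a v != set0 by apply/set0Pn; exists q0.
have := tie_in best_neq0.
rewrite !inE => /andP[/andP[feas_q /forallP u_q] /forallP price_q].
apply/le_anti/andP; split.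
  by apply: price_max => //; apply: (implyP (u_q q0)); rewrite inE.
apply: (implyP (price_q q0)); rewrite !inE feas_q0.
by apply/forallP => q; apply/implyP; rewrite inE; apply: u_max.
Qed.

Lemma bprice_tie_single_minded used a l c :
  (forall i, 0 <= a i) -> 0 <= c ->
  (a l <= c -> feasible s used (unit_bundle l)) ->
  bprice a (tie (best_bundles s used a (single_minded l c))) =
  if a l <= c then a l else 0.
Proof.
move=> a_ge0 c_ge0 feas_l.
have bounds q := conj (bprice_ge0 q a_ge0) (bprice_ge_item l q a_ge0).
case: ifPn => [le_ac|lt_ca].
  rewrite -(bprice_unit a l); apply: bprice_tie_best => [|q _|q _];
    rewrite ?feas_l // !ffunE bprice_unit eqxx mulr1;
    by case: (bounds q); case: (q l); rewrite ?mulr0 ?mulr1; lra.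
rewrite -ltNge in lt_ca; rewrite -(bprice0 a).
apply: bprice_tie_best => [|q _|q _]; rewrite ?feasible0 // !ffunE bprice0 mulr0;
  by case: (bounds q); case: (q l); rewrite ?mulr0 ?mulr1; lra.
Qed.

Lemma run_zero_valuations a l vs used :
  (forall i, 0 <= a i) -> 0 < a l ->
  all (pred1 (single_minded l 0)) vs -> run s tie a vs used = 0.
Proof.
move=> a_ge0 a_l_gt0; elim: vs used => [|v vs IHvs] used //= /andP[/eqP -> zero_vs].
rewrite IHvs // bprice_tie_single_minded // ?lexx; last by move=> ?; lra.
by rewrite addr0; case: ifP => // ?; lra.
Qed.

Definition single_bidder (n : nat) l c : {ffun 'I_n.+1 -> {ffun bundle k -> R}} :=
  [ffun i => if i == ord0 then single_minded l c else single_minded l 0].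

Hypothesis supply_gt0 : forall l c, s l = Some c -> (0 < c)%N.

Lemma Rev_single_bidder n a l c :
  (forall i, 0 <= a i) -> 0 < a l -> 0 <= c ->
  Rev s tie a (single_bidder n l c) = if a l <= c then a l else 0.
Proof.
move=> a_ge0 a_l_gt0 c_ge0; rewrite /Rev enum_ordSl /= ffunE eqxx.
rewrite (run_zero_valuations (l := l)) // ?addr0.
  by rewrite bprice_tie_single_minded // => _; apply: feasible_unit_bundle.
rewrite all_map; apply/allP => _ /mapP[i _ ->] /=; rewrite ffunE.
by case: eqP => // /(congr1 val).
Qed.

Lemma single_bidder_at n l c : single_bidder n l c ord0 (unit_bundle l) = c.
Proof. by rewrite !ffunE eqxx mulr1. Qed.

Lemma single_bidder_valid n l c : 0 <= c <= 1 -> valid_profile (single_bidder n l c).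
Proof.
move=> /andP[c_ge0 c_le1] i; rewrite ffunE; split.
  by case: ifP => _; rewrite !ffunE mulr0.
by move=> q; case: ifP => _; rewrite ffunE; case: (q l);
  rewrite ?mulr1 ?mulr0 ?c_ge0 ?c_le1 ?lexx ?ler01.
Qed.

End SingleMinded.

Section Weights.
Variables (R : realFieldType) (m : nat) (g : nat -> R).
Hypothesis g01 : forall t, 0 <= g t <= 1.
Let M : R := m%:R.

Definition potential (t : nat) : R :=
  if (t <= m)%N then M * (g t + M) / t%:R else 0.

Definition weight (t : nat) : R := potential t - potential t.+1.

(* The shift of g by M is what makes the potential nonincreasing; it cancels in
   differences of rows. *)
Lemma weight_ge0 t : (0 < t <= m)%N -> 0 <= weight t.
Proof.
move=> /andP[t_gt0 le_tm]; rewrite /weight /potential le_tm.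
have t_pos : 0 < t%:R :> R by rewrite ltr0n.
have [g_t0 g_t1] := andP (g01 t).
case: (ltnP t m) => [lt_tm|_];
  last by rewrite subr0 divr_ge0 ?mulr_ge0 ?addr_ge0 ?ler0n.
have [g_t'0 g_t'1] := andP (g01 t.+1).
have le_tM : t%:R + 1 <= M by rewrite /M natr1 ler_nat.
rewrite -natr1.
have -> : M * (g t + M) / t%:R - M * (g t.+1 + M) / (t%:R + 1) =
    M * ((g t + M) * (t%:R + 1) - (g t.+1 + M) * t%:R) / (t%:R * (t%:R + 1)).
  by field; apply/andP; split; lra.
by rewrite divr_ge0 ?mulr_ge0 ?ler0n //; nra.
Qed.

Lemma sum_weight_threshold p : (0 < p <= m)%N ->
  \sum_(t <- iota 1 m) weight t * (if (p <= t)%N then p%:R / M else 0) = g p + M.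
Proof.
move=> /andP[p_gt0 le_pm].
have -> : m = (p.-1 + (m - p.-1))%N by lia.
rewrite iotaD big_cat /= big1_seq ?add0r; last first.
  by move=> t; rewrite mem_iota => /andP[_ ?]; rewrite ifF ?mulr0 //; lia.
rewrite (eq_big_seq (fun t => weight t * (p%:R / M))); last first.
  by move=> t; rewrite mem_iota => /andP[le_pt _]; rewrite ifT //; lia.
have -> : iota (1 + p.-1) (m - p.-1) = index_iota p m.+1.
  by rewrite /index_iota; congr iota; lia.
rewrite -big_distrl /= (telescope_sumr_eq (fun t => - potential t)); last 2 first.
- by lia.
- by move=> t _; rewrite /weight opprK addrC.
rewrite /potential ltnn le_pm oppr0 add0r opprK.
have p_neq0 : p%:R != 0 :> R by rewrite pnatr_eq0 -lt0n.
have M_neq0 : M != 0 by rewrite pnatr_eq0 -lt0n (leq_trans p_gt0).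
by field; rewrite p_neq0 M_neq0.
Qed.

End Weights.

Lemma single_bidder_inj (R : realFieldType) k n (l : 'I_k) :
  injective (@single_bidder R k n l).
Proof.
move=> c c' eq_c.
pose at_unit (v : {ffun 'I_n.+1 -> {ffun bundle k -> R}}) := v ord0 (unit_bundle l).
by have := congr1 at_unit eq_c; rewrite /at_unit !single_bidder_at.
Qed.

Lemma Rev_priceVec_single_bidder (R : realFieldType) k m n
    (s : 'I_k -> option nat) (tie : {set bundle k} -> bundle k) x l t :
  (0 < m)%N -> (forall l c, s l = Some c -> (0 < c)%N) ->
  (forall A : {set bundle k}, A != set0 -> tie A \in A) ->
  Rev s tie (@priceVec R k m x) (single_bidder n l (t%:R / m%:R)) =
  if ((x l).+1 <= t)%N then (x l).+1%:R / m%:R else 0.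
Proof.
move=> m_gt0 supply_gt0 tie_in.
have price_gt0 i : 0 < @priceVec R k m x i by rewrite divr_gt0 ?ltr0n.
rewrite Rev_single_bidder // ?divr_ge0 ?ler0n // => [|i]; last exact: ltW.
by rewrite ler_pM2r ?invr_gt0 ?ltr0n // ler_nat.
Qed.

Lemma ltn_pair_index l k b n : (l < k)%N -> (b < n)%N -> (l * n + b < k * n)%N.
Proof. by move=> lt_lk lt_bn; nia. Qed.

Lemma admissible01 (R : realFieldType) (X J : finType) (G : X -> J -> R) :
  (forall x x', (forall j, G x j = G x' j) -> x = x') ->
  (forall x j, G x j \in [:: 0; 1]) -> admissible G 2 1.
Proof.
move=> G_inj G01; split; [exact: G_inj | split].
  move=> j; apply: (@leq_trans (size [:: 0 : R; 1])) => //.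
  apply: uniq_leq_size; first exact: undup_uniq.
  by move=> y; rewrite mem_undup => /mapP[x _ ->].
move=> j x x'; have := G01 x j; have := G01 x' j; rewrite !inE.
by do 2 case/orP=> /eqP->; rewrite ?eqxx ?subr0 ?sub0r ?normrN ?normr1.
Qed.

Section GammaIP.
Variables (R : realFieldType) (k m : nat).

Lemma GammaIP01 x j : @GammaIP R k m x j \in [:: 0; 1].
Proof.
rewrite /GammaIP; case: insub => [l|]; last by rewrite inE eqxx.
by case: odd; rewrite !inE eqxx ?orbT.
Qed.

Lemma GammaIP_bit x (l : 'I_k) b (lt_b : (b < nbits m)%N) :
  @GammaIP R k m x (Ordinal (ltn_pair_index (ltn_ord l) lt_b)) =
  (odd ((x l).+1 %/ 2 ^ b))%:R.
Proof.
have nbits_gt0 : (0 < nbits m)%N by lia.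
by rewrite /GammaIP /= divnMDl // divn_small // addn0 modnMDl modn_small // valK.
Qed.

Lemma GammaIP_inj x x' :
  (forall j, @GammaIP R k m x j = @GammaIP R k m x' j) -> x = x'.
Proof.
move=> eq_rows; apply/ffunP => l; apply/val_inj/succn_inj.
have le_m : (m <= 2 ^ nbits m)%N by apply: up_logP.
apply: (@eq_of_low_bits (nbits m)); rewrite ?(leq_trans (ltn_ord _) le_m) //.
move=> b lt_b; have := eq_rows (Ordinal (ltn_pair_index (ltn_ord l) lt_b)).
by rewrite !GammaIP_bit => /eqP; rewrite eqr_nat; do 2 case: odd.
Qed.

Lemma GammaIP_implementable n s tie :
  (0 < m)%N -> (0 < n)%N -> (forall l c, s l = Some c -> (0 < c)%N) ->
  (forall A : {set bundle k}, A != set0 -> tie A \in A) ->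
  implementable (@valid_profile R k n)
    (fun x v => Rev s tie (@priceVec R k m x) v) (@GammaIP R k m) m.
Proof.
move=> m_gt0 n_gt0 supply_gt0 tie_in j.
case col_j: (insub (j %/ nbits m)%N : option 'I_k) => [l|]; last first.
  by exists [::]; split => // x x'; rewrite /GammaIP col_j subrr big_nil.
case: n n_gt0 => [//|n] _.
pose bit t : R := (odd (t %/ 2 ^ (j %% nbits m)))%:R.
have bit01 t : 0 <= bit t <= 1 by rewrite /bit; case: odd; rewrite ?lexx ?ler01.
have M_gt0 : 0 < m%:R :> R by rewrite ltr0n.
exists [seq (weight m bit t, single_bidder n l (t%:R / m%:R)) | t <- iota 1 m].
split.
- rewrite map_inj_uniq ?iota_uniq // => t t' [_ /single_bidder_inj].
  move/(congr1 (fun z => z * m%:R)); rewrite !divfK ?gt_eqF //.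
  by move/eqP; rewrite eqr_nat => /eqP.
- by rewrite size_map size_iota.
- move=> p /mapP[t]; rewrite mem_iota => range_t -> /=; split.
    by apply: weight_ge0 => //; lia.
  apply: single_bidder_valid; rewrite divr_ge0 ?ler0n //=.
  by rewrite ler_pdivrMr // mul1r ler_nat; lia.
move=> x x'; rewrite big_map.
under eq_bigr do rewrite /= !Rev_priceVec_single_bidder // mulrBr.
rewrite sumrB !sum_weight_threshold ?ltn_ord //.
by rewrite /GammaIP col_j; ring.
Qed.

End GammaIP.

Unset Implicit Arguments.

Theorem lemma3p4 (R : realFieldType) (k n m : nat)
    (s : 'I_k -> option nat) (tie : {set bundle k} -> bundle k) :
  (0 < m)%N -> (0 < n)%N ->
  (forall l c, s l = Some c -> (0 < c)%N) ->
  (forall A : {set bundle k}, A != set0 -> tie A \in A) ->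
  admissible (@GammaIP R k m) 2 1 /\
  implementable (@valid_profile R k n)
    (fun (x : {ffun 'I_k -> 'I_m}) (v : {ffun 'I_n -> {ffun bundle k -> R}}) =>
       @Rev R k n s tie (@priceVec R k m x) v)
    (@GammaIP R k m) m.
Proof.
move=> m_gt0 n_gt0 supply_gt0 tie_in; split.
  exact: admissible01 (@GammaIP_inj R k m) (@GammaIP01 R k m).
exact: GammaIP_implementable.
Qed.
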